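(* Let $L$ be a sublattice of $A_n$ of rank $n$. For every $p\in L$, the Voronoi cell $V_\triangle(p)$ equals $\mathrm{pr}_0\big(\{x\in\mathbb R^{n+1}:x\le p\}\cap\partial\Sigma^c(L)\big)$. Consequently the Voronoi diagram of $L$ under $d_\triangle$ is the projection of $\partial\Sigma^c(L)$ onto $H_0$ along $(1,\dots,1)$.
   Context: Let $n\ge 1$, $H_0=\{x\in\mathbb R^{n+1}:\sum_i x_i=0\}$ and $A_n=H_0\cap\mathbb Z^{n+1}$. For $x\in\mathbb R^{n+1}$, $\deg(x)=\sum_i x_i$, and $\mathrm{pr}_0(x)=x-\frac{\deg(x)}{n+1}(1,\dots,1)$. Write $x\le y$ iff $x_i\le y_i$ for all $i$. Let $\Sigma^{\mathbb R}(L)=\{x\in\mathbb R^{n+1}: x\not\le q\text{ for all }q\in L\}$ and let $\Sigma^c(L)$ be its topological closure in $\mathbb R^{n+1}$. For $p,q\in H_0$ let $d_\triangle(p,q)=\max_i(p_i-q_i)$. For $p\in L$, the Voronoi cell is $V_\triangle(p)=\{x\in H_0: d_\triangle(x,p)\le d_\triangle(x,p')\ \forall p'\in L\}$. *)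

From mathcomp Require Import all_boot.
From Stdlib Require Import Reals.
Open Scope R_scope.

Definition vec (n : nat) := 'I_n.+1 -> R.

Definition deg {n : nat} (x : vec n) : R := \big[Rplus/0]_(i < n.+1) x i.

Definition inH0 {n : nat} (x : vec n) : Prop := deg x = 0.

Definition pr0 {n : nat} (x : vec n) : vec n :=
  fun i => x i - deg x / INR n.+1.

Definition leV {n : nat} (x y : vec n) : Prop := forall i, x i <= y i.

(* L is a sublattice of A_n: a subgroup of (Z^{n+1}, +) contained in H_0 *)
Definition sublattice_An (n : nat) (L : vec n -> Prop) : Prop :=
  L (fun _ => 0) /\
  (forall p q, L p -> L q -> L (fun i => p i - q i)) /\
  (forall p, L p -> (forall i, exists z : Z, p i = IZR z) /\ inH0 p).

Definition has_rank (n : nat) (L : vec n -> Prop) : Prop :=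
  exists v : 'I_n -> vec n,
    (forall k, L (v k)) /\
    (forall c : 'I_n -> R,
        (forall j, \big[Rplus/0]_(k < n) (c k * v k j) = 0) -> forall k, c k = 0).

Definition SigmaR {n : nat} (L : vec n -> Prop) (x : vec n) : Prop :=
  forall q, L q -> ~ leV x q.

(* topology of R^{n+1} (sup-norm balls; equivalent to the Euclidean topology) *)
Definition closure {n : nat} (S : vec n -> Prop) (x : vec n) : Prop :=
  forall eps, 0 < eps -> exists y, S y /\ forall i, Rabs (x i - y i) < eps.

Definition interior {n : nat} (S : vec n -> Prop) (x : vec n) : Prop :=
  exists eps, 0 < eps /\ forall y, (forall i, Rabs (y i - x i) < eps) -> S y.

Definition boundary {n : nat} (S : vec n -> Prop) (x : vec n) : Prop :=
  closure S x /\ ~ interior S x.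

Definition Sigmac {n : nat} (L : vec n -> Prop) : vec n -> Prop := closure (SigmaR L).

Definition dtri {n : nat} (p q : vec n) : R :=
  \big[Rmax/(p ord0 - q ord0)]_(i < n.+1) (p i - q i).

Definition Voronoi {n : nat} (L : vec n -> Prop) (p : vec n) (x : vec n) : Prop :=
  inH0 x /\ forall p', L p' -> dtri x p <= dtri x p'.

From Pilot Require Import Defs.
From mathcomp Require Import all_boot.
From Stdlib Require Import Reals Lra Lia Classical FunctionalExtensionality.
Open Scope R_scope.

(* Write d(y, q) = max_i (y_i - q_i) = dtri y q.  A point y lies in the closure
   of Sigma^R(L) iff d(y, q) >= 0 for all q in L, and in its interior iff these
   values are bounded away from 0.  Hence y is a boundary point below p in L iff
   d(y, p) = 0 <= d(y, q) for all q in L.  Since d(x - t(1,...,1), q) = d(x, q) - t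
   and pr_0 only forgets the component along (1,...,1), this is exactly the
   statement that pr_0 y lies in the Voronoi cell of p.  Finally every boundary
   point lies below some lattice point, because for integral q the values d(y, q)
   cannot accumulate at 0 from above; integrality is the only property of L
   that is used. *)

Lemma big_Rplus_subr (m : nat) (F : 'I_m -> R) c :
  \big[Rplus/0]_(i < m) (F i - c) = \big[Rplus/0]_(i < m) F i - INR m * c.
Proof.
elim: m F => [|m IH] F; first by rewrite !big_ord0 /=; ring.
by rewrite !big_ord_recl IH S_INR; ring.
Qed.

Lemma le_bigRmax (I : eqType) (r : seq I) (F : I -> R) a i :
  i \in r -> F i <= \big[Rmax/a]_(j <- r) F j.
Proof.
elim: r => [|j r IH] //; rewrite in_cons big_cons => /orP [/eqP <-|/IH].
- exact: Rmax_l.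
- by move/Rle_trans; apply; apply: Rmax_r.
Qed.

Lemma uniform_pos {I : finType} (P : I -> R -> Prop) :
  (forall i e e', 0 < e' <= e -> P i e -> P i e') ->
  (forall i, exists e, 0 < e /\ P i e) -> exists e, 0 < e /\ forall i, P i e.
Proof.
move=> P_down P_ex.
suff [e [e0 Pe]] : exists e, 0 < e /\ forall i, i \in index_enum I -> P i e.
  by exists e; split=> // i; apply/Pe/mem_index_enum.
elim: (index_enum I) => [|j r [e [e0 Pe]]]; first by exists 1; split=> //; lra.
have [ej [ej0 Pj]] := P_ex j; have min_pos := Rmin_pos _ _ ej0 e0.
exists (Rmin ej e); split=> // i; rewrite in_cons => /orP [/eqP ->|ir].
- by apply: (P_down j ej); [split=> //; apply: Rmin_l | ].
- by apply: (P_down i e); [split=> //; apply: Rmin_r | apply: Pe].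
Qed.

Lemma int_gap (y : R) :
  exists e, 0 < e /\ forall k : Z, y - e < IZR k -> y <= IZR k.
Proof.
have [up_gt up_le] := archimed y.
have [y_int | y_nint] := Req_dec y (IZR (up y) - 1).
- exists 1; split=> [|k lt_k]; first lra.
  have /lt_IZR : IZR (up y - 2) < IZR k by rewrite minus_IZR; lra.
  move=> lt; have : IZR (up y - 1) <= IZR k by apply: IZR_le; lia.
  rewrite minus_IZR; lra.
- exists (y - (IZR (up y) - 1)); split=> [|k lt_k]; first lra.
  have /lt_IZR : IZR (up y - 1) < IZR k by rewrite minus_IZR; lra.
  move=> lt; have : IZR (up y) <= IZR k by apply: IZR_le; lia.
  lra.
Qed.

Section Vectors.

Context {n : nat}.
Implicit Types (x y z p q : vec n).

Definition shift x (c : R) : vec n := fun i => x i - c.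

Lemma dtri_ge x p i : x i - p i <= dtri x p.
Proof. by apply: le_bigRmax; apply: mem_index_enum. Qed.

Lemma dtri_attained x p : exists i, dtri x p = x i - p i.
Proof.
apply: (big_ind (fun v => exists i, v = x i - p i)); first by exists ord0.
- move=> u v [i ->] [j ->].
  by apply: (Rmax_case _ _ (fun w => exists k, w = x k - p k)); eexists.
- by move=> i _; exists i.
Qed.

Lemma leV_dtri x p : leV x p <-> dtri x p <= 0.
Proof.
split=> [le_xp | le0 i].
- by have [i ->] := dtri_attained x p; have := le_xp i; lra.
- by have := dtri_ge x p i; lra.
Qed.

Lemma dtri_shift x p c : dtri (shift x c) p = dtri x p - c.
Proof.
apply: Rle_antisym.
- have [i ->] := dtri_attained (shift x c) p.
  by have := dtri_ge x p i; rewrite /shift; lra.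
- have [i ->] := dtri_attained x p.
  by have := dtri_ge (shift x c) p i; rewrite /shift; lra.
Qed.

Lemma dtri_near x y p e :
  (forall i, Rabs (y i - x i) < e) -> dtri x p < dtri y p + e.
Proof.
have [i ->] := dtri_attained x p => /(_ i) /Rabs_def2 [_ near].
by have := dtri_ge y p i; lra.
Qed.

Lemma pr0E x : pr0 x = shift x (deg x / INR n.+1).
Proof. by []. Qed.

Lemma deg_shift x c : deg (shift x c) = deg x - INR n.+1 * c.
Proof. exact: big_Rplus_subr. Qed.

Lemma pr0_shift x c : pr0 (shift x c) = pr0 x.
Proof.
apply: functional_extensionality => i.
by rewrite /pr0 deg_shift /shift; field; apply: not_0_INR.
Qed.

Lemma pr0_inH0 x : inH0 (pr0 x).
Proof. by rewrite /inH0 pr0E deg_shift; field; apply: not_0_INR. Qed.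

Lemma pr0_id x : inH0 x -> pr0 x = x.
Proof.
move=> x0; apply: functional_extensionality => i.
by rewrite /pr0 x0 Rdiv_0_l Rminus_0_r.
Qed.

(* [closure] and [interior] alone would refer to fingraph and Rtopology. *)
Lemma closure_of (S : vec n -> Prop) x : S x -> Defs.closure S x.
Proof.
move=> Sx e e0; exists x; split=> // i.
by rewrite Rminus_diag Rabs_R0.
Qed.

Lemma closure_idem (S : vec n -> Prop) x :
  Defs.closure (Defs.closure S) x -> Defs.closure S x.
Proof.
move=> clx e e0.
have [y [cly near_y]] := clx (e / 2) ltac:(lra).
have [z [Sz near_z]] := cly (e / 2) ltac:(lra).
exists z; split=> // i.
have := Rabs_triang (x i - y i) (y i - z i).
have := near_y i; have := near_z i.
by replace (x i - y i + (y i - z i)) with (x i - z i) by ring; lra.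
Qed.

Section Sigma.

Variable L : vec n -> Prop.

Lemma SigmaR_dtri y : SigmaR L y <-> forall q, L q -> 0 < dtri y q.
Proof.
split=> [Sy q Lq | pos q Lq].
- by apply: Rnot_le_lt => /leV_dtri; apply: Sy.
- by move/leV_dtri; have := pos q Lq; lra.
Qed.

Lemma Sigmac_dtri y : Sigmac L y <-> forall q, L q -> 0 <= dtri y q.
Proof.
split=> [cly q Lq | nonneg e e0].
- apply: Rnot_lt_le => neg.
  have [z [Sz near]] := cly (- dtri y q) ltac:(lra).
  have := (SigmaR_dtri z).1 Sz q Lq; have := dtri_near _ _ q _ near; lra.
- exists (shift y (- (e / 2))); split.
  + by apply/SigmaR_dtri => q Lq; rewrite dtri_shift; have := nonneg q Lq; lra.
  + by move=> i; rewrite /shift; apply: Rabs_def1; lra.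
Qed.

Lemma interior_Sigmac_dtri y :
  Defs.interior (Sigmac L) y <-> exists e, 0 < e /\ forall q, L q -> e <= dtri y q.
Proof.
split=> [[e [e0 ball_in]] | [e [e0 ge_e]]].
- exists (e / 2); split=> [|q Lq]; first lra.
  have near : forall i, Rabs (shift y (e / 2) i - y i) < e.
    by move=> i; rewrite /shift; apply: Rabs_def1; lra.
  by have := (Sigmac_dtri _).1 (ball_in _ near) q Lq; rewrite dtri_shift; lra.
- exists e; split=> // z near; apply/Sigmac_dtri => q Lq.
  by have := dtri_near _ _ q _ near; have := ge_e q Lq; lra.
Qed.

Lemma boundary_Sigmac_dtri y :
  boundary (Sigmac L) y <->
  (forall q, L q -> 0 <= dtri y q) /\
  ~ (exists e, 0 < e /\ forall q, L q -> e <= dtri y q).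
Proof.
split=> [[cly not_int] | [nonneg not_small]]; split.
- exact/Sigmac_dtri/closure_idem.
- by move/interior_Sigmac_dtri.
- exact/closure_of/Sigmac_dtri.
- by move/interior_Sigmac_dtri.
Qed.

Lemma below_boundary_dtri {p} y : L p ->
  leV y p /\ boundary (Sigmac L) y <->
  dtri y p = 0 /\ forall q, L q -> 0 <= dtri y q.
Proof.
move=> Lp; split=> [[/leV_dtri le0 /boundary_Sigmac_dtri [nonneg _]] | [p0 nonneg]].
- by have := nonneg p Lp; split=> //; lra.
- split; first by apply/leV_dtri; lra.
  apply/boundary_Sigmac_dtri; split=> // -[e [e0 ge_e]].
  by have := ge_e p Lp; lra.
Qed.

Lemma Voronoi_below_boundary {p} : L p -> forall x,
  Voronoi L p x <-> exists y, leV y p /\ boundary (Sigmac L) y /\ pr0 y = x.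
Proof.
move=> Lp x; split=> [[x0 closest] | [y [le_yp [bd <-]]]].
- have below : leV (shift x (dtri x p)) p /\
                 boundary (Sigmac L) (shift x (dtri x p)).
    apply/(below_boundary_dtri _ Lp); split=> [|q Lq]; rewrite dtri_shift.
    + lra.
    + by have := closest q Lq; lra.
  by exists (shift x (dtri x p)); rewrite pr0_shift pr0_id //; tauto.
- have [p0 nonneg] := (below_boundary_dtri y Lp).1 (conj le_yp bd).
  split=> [|q Lq]; first exact: pr0_inH0.
  by rewrite pr0E !dtri_shift; have := nonneg q Lq; lra.
Qed.

Lemma boundary_below_integral {y} :
  (forall q, L q -> forall i, exists k : Z, q i = IZR k) ->
  boundary (Sigmac L) y -> exists q, L q /\ leV y q.
Proof.
move=> L_int /boundary_Sigmac_dtri [_ not_small].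
have [e [e0 gap]] : exists e, 0 < e /\
    forall i (k : Z), y i - e < IZR k -> y i <= IZR k.
  apply: (uniform_pos (fun i e => forall k : Z, y i - e < IZR k -> y i <= IZR k)).
  - by move=> i e e' le_e' gap_e k lt_k; apply: gap_e; lra.
  - by move=> i; apply: int_gap.
apply: NNPP => none_above; apply: not_small; exists e; split=> // q Lq.
apply: Rnot_lt_le => small; apply: none_above; exists q; split=> // i.
have [k qk] := L_int q Lq i; rewrite qk; apply: gap; rewrite -qk.
by have := dtri_ge y q i; lra.
Qed.

End Sigma.

End Vectors.

Theorem mainTheorem11 (n : nat) (L : vec n -> Prop) :
  (1 <= n)%nat ->
  sublattice_An n L -> has_rank n L ->
  (forall p : vec n, L p ->
     forall x : vec n,
       Voronoi L p x <->
       exists y : vec n, leV y p /\ boundary (Sigmac L) y /\ pr0 y = x) /\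
  (forall x : vec n,
     (exists p, L p /\ Voronoi L p x) <->
     exists y : vec n, boundary (Sigmac L) y /\ pr0 y = x).
Proof.
move=> _ [_ [_ L_int]] _.
split=> [p Lp | x]; first exact: Voronoi_below_boundary.
split=> [[p [Lp /(Voronoi_below_boundary L Lp) [y [_ yx]]]] | [y [bd yx]]].
- by exists y.
- have [p [Lp le_yp]] := boundary_below_integral L (fun q Lq => (L_int q Lq).1) bd.
  exists p; split=> //; apply/(Voronoi_below_boundary L Lp).
  by exists y.
Qed.
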